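(* Let $k,\ell\ge 1$ and let $R=[0,\ell]\times[0,k]$. Consider partially directed walks on $\mathbb Z^2$ (self-avoiding walks using only North $(0,1)$, East $(1,0)$ and South $(0,-1)$ unit steps) that start at $(0,0)$, stay in $R$, and end at $(\ell,k)$. Such a walk is generated by the following random procedure: starting from $(0,0)$, at each time one chooses uniformly at random one of the eligible steps, where a step (N, E or S) is eligible if, once appended to the current walk, it gives a self-avoiding N/E/S walk staying in $R$ that can be extended by N/E/S steps into such a walk ending at $(\ell,k)$; the procedure stops on reaching $(\ell,k)$. Let $p(w_0)$ denote the probability of obtaining the walk $w_0$. Write $w_0=w\,\mathsf E\,\mathsf N\cdots\mathsf N$, i.e. $w$ is the prefix of $w_0$ preceding its last East step (heights measured from the bottom side $y=0$). Then $$\frac1{p(w_0)}=2\cdot 3^{h(w)}\,2^{h_c(w)}\,2^{v(w)}\,1^{v_c(w)},$$ where $h(w)$ is the number of horizontal steps of $w$ lying neither at height $0$ nor at height $k$; $h_c(w)$ is the number of horizontal steps of $w$ lying at height $0$ or $k$; $v(w)$ is the number of vertical steps of $w$ ending neither at height $0$ nor at height $k$; and $v_c(w)$ is the number of vertical steps of $w$ ending at height $0$ or $k$. *)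

From mathcomp Require Import all_boot all_order all_algebra.
From mathcomp Require Import boolp.
Set Implicit Arguments. Unset Strict Implicit. Unset Printing Implicit Defensive.
Import Order.TTheory GRing.Theory Num.Theory.
Local Open Scope ring_scope.

Inductive step := N | E | S.

Definition is_E (d : step) : bool := if d is E then true else false.

Definition move (p : int * int) (d : step) : int * int :=
  match d with
  | N => (p.1, p.2 + 1)
  | E => (p.1 + 1, p.2)
  | S => (p.1, p.2 - 1)
  end.

Fixpoint trace (p : int * int) (u : seq step) : seq (int * int) :=
  p :: (if u is d :: u' then trace (move p d) u' else [::]).

Definition endpt (u : seq step) : int * int := foldl move (0, 0) u.

Definition in_rect (l k : nat) (p : int * int) : bool :=
  (0 <= p.1 <= l%:Z) && (0 <= p.2 <= k%:Z).

Definition admissible (l k : nat) (u : seq step) : bool :=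
  uniq (trace (0, 0) u) && all (in_rect l k) (trace (0, 0) u).

Definition complete (l k : nat) (u : seq step) : bool :=
  admissible l k u && (endpt u == (l%:Z, k%:Z)).

Definition extendable (l k : nat) (u : seq step) : Prop :=
  exists s : seq step, complete l k (u ++ s).

Definition elig (l k : nat) (u : seq step) : nat :=
  count (fun d => `[< extendable l k (rcons u d) >]) [:: N; E; S].

Definition prob (l k : nat) (w0 : seq step) : rat :=
  \prod_(i < size w0) ((elig l k (take i w0))%:R)^-1.

Definition ystart (w : seq step) (i : nat) : int := (endpt (take i w)).2.
Definition yend (w : seq step) (i : nat) : int := (endpt (take i.+1 w)).2.

Definition on_side (k : nat) (y : int) : bool := (y == 0) || (y == k%:Z).

Definition hcount (k : nat) (w : seq step) : nat :=
  count (fun i => is_E (nth N w i) && ~~ on_side k (ystart w i)) (iota 0 (size w)).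
Definition hccount (k : nat) (w : seq step) : nat :=
  count (fun i => is_E (nth N w i) && on_side k (ystart w i)) (iota 0 (size w)).
Definition vcount (k : nat) (w : seq step) : nat :=
  count (fun i => ~~ is_E (nth N w i) && ~~ on_side k (yend w i)) (iota 0 (size w)).
Definition vccount (k : nat) (w : seq step) : nat :=
  count (fun i => ~~ is_E (nth N w i) && on_side k (yend w i)) (iota 0 (size w)).

From mathcomp Require Import all_boot all_order all_algebra.
From mathcomp Require Import boolp zify ring.
Set Implicit Arguments. Unset Strict Implicit. Unset Printing Implicit Defensive.
Import Order.TTheory GRing.Theory Num.Theory.
Local Open Scope ring_scope.

(* At a prefix that has not yet reached column l, East is always eligible (complete by one East
   step, North up to height k, East up to column l). Since a self-avoiding N/E/S walk runs
   through each column along a vertical segment, North is eligible exactly when the last step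
   was not South and the height is below k, and symmetrically for South. So the number of
   choices made right after a step of w is 3 or 2 for an East step and 2 or 1 for a vertical
   one, according to whether that step ends off or on the sides y = 0, y = k. The first move
   has 2 choices, and in the last column only North is eligible. *)

Definition is_N (d : step) : bool := if d is N then true else false.
Definition is_S (d : step) : bool := if d is S then true else false.

Lemma move_SN p : move (move p S) N = p.
Proof. by case: p => a b /=; congr pair; lia. Qed.

Lemma move_NS p : move (move p N) S = p.
Proof. by case: p => a b /=; congr pair; lia. Qed.

Lemma foldl_move_nseqN p n : foldl move p (nseq n N) = (p.1, p.2 + n%:Z).
Proof. by elim: n p => [|n IHn] [a b] /=; rewrite ?addr0 // IHn /=; congr pair; lia. Qed.

Lemma foldl_move_nseqE p n : foldl move p (nseq n E) = (p.1 + n%:Z, p.2).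
Proof. by elim: n p => [|n IHn] [a b] /=; rewrite ?addr0 // IHn /=; congr pair; lia. Qed.

Lemma trace_cat p u v :
  trace p (u ++ v) = trace p u ++ behead (trace (foldl move p u) v).
Proof. by elim: u p => [|d u IHu] p /=; [case: v | rewrite IHu]. Qed.

Lemma mem_trace_head p u : p \in trace p u.
Proof. by case: u => [|d u]; rewrite inE eqxx. Qed.

Lemma mem_trace_last p u : foldl move p u \in trace p u.
Proof. by elim: u p => [|d u IHu] p /=; rewrite inE ?eqxx ?IHu ?orbT. Qed.

Lemma endpt_rcons u d : endpt (rcons u d) = move (endpt u) d.
Proof. by rewrite /endpt foldl_rcons. Qed.

Lemma trace0_rcons u d :
  trace (0, 0) (rcons u d) = rcons (trace (0, 0) u) (endpt (rcons u d)).
Proof. by rewrite endpt_rcons -cats1 trace_cat cats1. Qed.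

Lemma trace_x_between p u q :
  q \in trace p u -> p.1 <= q.1 <= (foldl move p u).1.
Proof.
elim: u p q => [|d u IHu] p q /=; first by rewrite inE => /eqP ->; lia.
have := IHu _ _ (mem_trace_head (move p d) u).
rewrite inE => x_head /orP[/eqP -> | /IHu]; by case: d x_head => /=; lia.
Qed.

Lemma endpt_cat_x u v : (endpt u).1 <= (endpt (u ++ v)).1.
Proof.
rewrite /endpt foldl_cat.
by have /andP[] := trace_x_between (mem_trace_head (foldl move (0, 0) u) v).
Qed.

Lemma trace_NE_box p t q : ~~ has is_S t -> q \in trace p t ->
  [/\ p.1 <= q.1, p.2 <= q.2,
      q.1 <= (foldl move p t).1 & q.2 <= (foldl move p t).2].
Proof.
elim: t p q => [|d t IHt] p q /=; first by rewrite inE => _ /eqP ->; split; lia.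
rewrite negb_or => /andP[notS_d notS_t].
have [] := IHt _ _ notS_t (mem_trace_head (move p d) t).
case: d notS_d => //= _ ? ? ? ?;
  rewrite inE => /orP[/eqP -> | /(IHt _ _ notS_t)[] /=]; split; lia.
Qed.

Lemma trace_NE_uniq p t : ~~ has is_S t -> uniq (trace p t).
Proof.
elim: t p => [|d t IHt] p //=; rewrite negb_or => /andP[notS_d notS_t].
rewrite IHt // andbT; apply/negP => /(trace_NE_box notS_t)[].
by case: d notS_d => //= *; lia.
Qed.

Lemma admissible_catl l k u v : admissible l k (u ++ v) -> admissible l k u.
Proof.
by rewrite /admissible trace_cat cat_uniq all_cat => /andP[/andP[-> _] /andP[-> _]].
Qed.

Lemma admissible_rcons l k u d : admissible l k (rcons u d) =
  [&& admissible l k u, endpt (rcons u d) \notin trace (0, 0) u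
    & in_rect l k (endpt (rcons u d))].
Proof.
rewrite /admissible trace0_rcons rcons_uniq all_rcons.
by case: (uniq _); case: (all _ _); case: (_ \notin _); case: (in_rect _ _ _).
Qed.

Lemma in_rect_endpt l k u : admissible l k u ->
  (0 <= (endpt u).1 <= l%:Z) && (0 <= (endpt u).2 <= k%:Z).
Proof. by case/andP => _ /allP; apply; apply: mem_trace_last. Qed.

Lemma extendable_admissible l k u : extendable l k u -> admissible l k u.
Proof. by case=> s /andP[/admissible_catl]. Qed.

Lemma extendable_rcons l k u d : extendable l k (rcons u d) -> extendable l k u.
Proof. by case=> s; rewrite cat_rcons; exists (d :: s). Qed.

Lemma extendable_take l k w i : complete l k w -> extendable l k (take i w).
Proof. by exists (drop i w); rewrite cat_take_drop. Qed.

Lemma extendable_rconsE l k u : admissible l k u -> (endpt u).1 < l%:Z ->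
  extendable l k (rcons u E).
Proof.
move=> adm_u x_lt; have /andP[/andP[x_ge0 _] /andP[y_ge0 y_le]] := in_rect_endpt adm_u.
move: adm_u x_lt x_ge0 y_ge0 y_le => /andP[uniq_u rect_u].
rewrite /endpt; set e := foldl move (0, 0) u => x_lt x_ge0 y_ge0 y_le.
pose t := nseq (absz (k%:Z - e.2)%R) N ++ nseq (absz (l%:Z - e.1 - 1)%R) E.
have notS_t : ~~ has is_S t by rewrite has_cat !has_nseq /= !andbF.
have end_t : foldl move (move e E) t = (l%:Z, k%:Z).
  by rewrite foldl_cat foldl_move_nseqN foldl_move_nseqE /=; congr pair; lia.
exists t; rewrite /complete /admissible /endpt cat_rcons foldl_cat -/e /= end_t eqxx andbT.
rewrite trace_cat -/e /= cat_uniq uniq_u trace_NE_uniq // all_cat rect_u /= andbT.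
apply/andP; split.
- apply/hasPn => q /(trace_NE_box notS_t)[x_q _ _ _]; apply/negP.
  by move=> /trace_x_between /=; rewrite -/e /= in x_q *; lia.
- by apply/allP => q /(trace_NE_box notS_t)[]; rewrite end_t /in_rect /=; lia.
Qed.

(* A self-avoiding N/E/S walk visits each column along a vertical segment,
   entered at one end and traversed in the direction of the last step. *)
Lemma column_rcons u d q : uniq (trace (0, 0) (rcons u d)) ->
  q \in trace (0, 0) (rcons u d) -> q.1 = (endpt (rcons u d)).1 ->
  match d with
  | N => q.2 <= (endpt (rcons u d)).2
  | S => (endpt (rcons u d)).2 <= q.2
  | E => q == endpt (rcons u d)
  end.
Proof.
elim/last_ind: u d q => [|u d' IHu] d q.
  by rewrite /endpt /= !inE => _ /orP[] /eqP ->; case: d => /=; rewrite ?eqxx /=; lia.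
rewrite trace0_rcons rcons_uniq mem_rcons inE => /andP[fresh uniq_u].
case/orP=> [/eqP -> | q_u]; first by case: d {fresh} => /=; rewrite ?lexx.
have := IHu d' q uniq_u q_u.
have := trace_x_between q_u; rewrite -/(endpt _) !endpt_rcons.
have last_u : endpt u \in trace (0, 0) (rcons u d').
  by rewrite trace0_rcons mem_rcons inE mem_trace_last orbT.
move: fresh last_u; rewrite !endpt_rcons; clear uniq_u q_u IHu.
case: d; case: d' => fresh last_u x_q IH x_eq;
  rewrite ?move_SN ?move_NS ?last_u // in fresh; move: x_q IH x_eq => /=.
all: move=> x_q IH x_eq; try lia; rewrite x_eq in IH; have := IH erefl.
all: try (move/eqP=> q_end; rewrite q_end /=); lia.
Qed.

Lemma extendable_rconsN l k u : admissible l k u ->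
  (endpt u).1 < l%:Z -> (endpt u).2 < k%:Z ->
  (forall q, q \in trace (0, 0) u -> q.1 = (endpt u).1 -> q.2 <= (endpt u).2) ->
  extendable l k (rcons u N).
Proof.
move=> adm_u x_lt y_lt below; apply: (@extendable_rcons _ _ _ E).
apply: extendable_rconsE; last by rewrite endpt_rcons.
rewrite admissible_rcons adm_u endpt_rcons /in_rect /=.
apply/andP; split; last by move: (in_rect_endpt adm_u) => /and3P[]; lia.
by apply/negP => /below /= /(_ erefl); lia.
Qed.

Lemma extendable_rconsS l k u : admissible l k u ->
  (endpt u).1 < l%:Z -> 0 < (endpt u).2 ->
  (forall q, q \in trace (0, 0) u -> q.1 = (endpt u).1 -> (endpt u).2 <= q.2) ->
  extendable l k (rcons u S).
Proof.
move=> adm_u x_lt y_gt above; apply: (@extendable_rcons _ _ _ E).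
apply: extendable_rconsE; last by rewrite endpt_rcons.
rewrite admissible_rcons adm_u endpt_rcons /in_rect /=.
apply/andP; split; last by move: (in_rect_endpt adm_u) => /and3P[]; lia.
by apply/negP => /above /= /(_ erefl); lia.
Qed.

Lemma asbool_extendable_rconsN l k u d : admissible l k (rcons u d) ->
  (endpt (rcons u d)).1 < l%:Z ->
  `[< extendable l k (rcons (rcons u d) N) >] =
    ~~ is_S d && ((endpt (rcons u d)).2 < k%:Z).
Proof.
move=> adm x_lt; apply/asboolP/idP.
- move/extendable_admissible; rewrite admissible_rcons => /and3P[_ fresh].
  rewrite /in_rect => /andP[_]; rewrite endpt_rcons /= => y_le.
  apply/andP; split; last by lia.
  case: d adm x_lt fresh {y_le} => //= adm _.
  by rewrite !endpt_rcons move_SN trace0_rcons mem_rcons inE mem_trace_last orbT.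
- case/andP=> notS_d y_lt; apply: extendable_rconsN => // q q_u q_x.
  have := column_rcons (proj1 (andP adm)) q_u q_x.
  by case: d notS_d {adm x_lt y_lt q_u q_x} => //= _ /eqP ->.
Qed.

Lemma asbool_extendable_rconsS l k u d : admissible l k (rcons u d) ->
  (endpt (rcons u d)).1 < l%:Z ->
  `[< extendable l k (rcons (rcons u d) S) >] =
    ~~ is_N d && (0 < (endpt (rcons u d)).2).
Proof.
move=> adm x_lt; apply/asboolP/idP.
- move/extendable_admissible; rewrite admissible_rcons => /and3P[_ fresh].
  rewrite /in_rect => /andP[_]; rewrite endpt_rcons /= => y_ge.
  apply/andP; split; last by lia.
  case: d adm x_lt fresh {y_ge} => //= adm _.
  by rewrite !endpt_rcons move_NS trace0_rcons mem_rcons inE mem_trace_last orbT.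
- case/andP=> notN_d y_gt; apply: extendable_rconsS => // q q_u q_x.
  have := column_rcons (proj1 (andP adm)) q_u q_x.
  by case: d notN_d {adm x_lt y_gt q_u q_x} => //= _ /eqP ->.
Qed.

Lemma eligE l k u : elig l k u =
  (`[< extendable l k (rcons u N) >] + `[< extendable l k (rcons u E) >]
   + `[< extendable l k (rcons u S) >])%N.
Proof. by rewrite /elig /= addn0 addnA. Qed.

Lemma elig_nil l k : (1 <= l)%N -> (1 <= k)%N -> elig l k [::] = 2%N.
Proof.
move=> l_ge1 k_ge1; have adm0 : admissible l k [::] by rewrite /admissible /in_rect /=; lia.
have x0 : (endpt [::]).1 < l%:Z by rewrite /endpt /=; lia.
rewrite eligE (asboolT (extendable_rconsE adm0 x0)) asboolT; last first.
  by apply: extendable_rconsN => // q; rewrite inE => /eqP ->.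
rewrite asboolF // => /extendable_admissible.
by rewrite admissible_rcons /in_rect /endpt.
Qed.

Definition step_weight (k : nat) (d : step) (y : int) : nat :=
  if is_E d then (if on_side k y then 2 else 3) else (if on_side k y then 1 else 2).

Lemma elig_rcons l k u d : (1 <= k)%N -> admissible l k (rcons u d) ->
  (endpt (rcons u d)).1 < l%:Z ->
  elig l k (rcons u d) = step_weight k d (endpt (rcons u d)).2.
Proof.
move=> k_ge1 adm x_lt.
rewrite eligE asbool_extendable_rconsN // asbool_extendable_rconsS //.
rewrite (asboolT (extendable_rconsE adm x_lt)).
have /andP[_ y_in] := in_rect_endpt adm.
move: (adm); rewrite admissible_rcons => /and3P[/in_rect_endpt/andP[_ y0_in] _ _].
move: y_in; rewrite /step_weight /on_side endpt_rcons.
by case: d {adm x_lt} => /= y_in; case: ifP; lia.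
Qed.

Lemma last_column_climb l k s a b : a < b <= k%:Z ->
  all (in_rect l k) (trace (l%:Z, a) s) ->
  foldl move (l%:Z, a) s = (l%:Z, k%:Z) -> (l%:Z, b) \in trace (l%:Z, a) s.
Proof.
elim: s a => [|d s IHs] a ab /=; first by move=> _ [] ak; lia.
move=> /andP[_ rect_s] end_s; rewrite inE; apply/orP; right.
case: d rect_s end_s => /= rect_s end_s.
- have [->|b_ne] := eqVneq (a + 1) b; first exact: mem_trace_head.
  by apply: IHs => //; lia.
- by move: rect_s; case: s {IHs end_s} => [|d s] /=; rewrite /in_rect /=; lia.
- by apply: IHs => //; lia.
Qed.

Lemma not_extendable_last_columnS l k u : (endpt u).1 = l%:Z ->
  ~ extendable l k (rcons u S).
Proof.
move=> x_end [s /andP[/andP[uniq_us rect_us] /eqP end_us]].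
have adm_u : admissible l k u.
  by apply: (@admissible_catl _ _ _ (S :: s)); rewrite -cat_rcons; apply/andP.
have /andP[_ /andP[_ y_le]] := in_rect_endpt adm_u.
move: uniq_us rect_us end_us.
rewrite -cats1 -catA /endpt foldl_cat trace_cat -/(endpt u) cat_uniq all_cat.
rewrite /= => /and3P[_ fresh _] /andP[_ rect_s].
have := mem_trace_last (0, 0) u; rewrite -/(endpt u).
case: (endpt u) x_end y_le fresh rect_s => x y /= -> y_le fresh rect_s last_u end_s.
have climb : y - 1 < y <= k%:Z by rewrite y_le andbT; lia.
by move/hasPn: fresh => /(_ _ (last_column_climb climb rect_s end_s)); rewrite last_u.
Qed.

Lemma elig_last_column l k u : (endpt u).1 = l%:Z ->
  extendable l k (rcons u N) -> elig l k u = 1%N.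
Proof.
move=> x_end extN; rewrite eligE (asboolT extN) asboolF; last first.
  by move/extendable_admissible; rewrite admissible_rcons endpt_rcons /in_rect /= x_end; lia.
by rewrite asboolF //; apply: not_extendable_last_columnS.
Qed.

Lemma prod_pow_count (s : seq nat) (A B C D : pred nat) :
  (\prod_(i <- s) (3 ^ A i * 2 ^ B i * 2 ^ C i * 1 ^ D i) =
   3 ^ count A s * 2 ^ count B s * 2 ^ count C s * 1 ^ count D s)%N.
Proof. by elim: s => [|x s IHs]; rewrite ?big_nil // big_cons IHs /= !expnD; ring. Qed.

Lemma yend_E_step w i : (i < size w)%N -> nth N w i = E -> yend w i = ystart w i.
Proof. by move=> lt_i_w w_i; rewrite /yend /ystart (take_nth N lt_i_w) endpt_rcons w_i. Qed.

Lemma prod_step_weight k w :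
  (\prod_(i < size w) step_weight k (nth N w i) (yend w i) =
   3 ^ hcount k w * 2 ^ hccount k w * 2 ^ vcount k w * 1 ^ vccount k w)%N.
Proof.
rewrite -(big_mkord xpredT (fun i => step_weight k (nth N w i) (yend w i))).
rewrite -prod_pow_count /index_iota subn0.
apply: eq_big_seq => i; rewrite mem_iota add0n => lt_i_w.
rewrite /step_weight; case w_i: (nth N w i) => /=; rewrite ?(yend_E_step lt_i_w w_i);
  by case: on_side.
Qed.

Lemma elig_take_before_lastE l k w t i : (1 <= k)%N ->
  complete l k (w ++ E :: t) -> (i < size w)%N ->
  elig l k (take i.+1 (w ++ E :: t)) = step_weight k (nth N w i) (yend w i).
Proof.
move=> k_ge1 compl lt_i_w.
have take_i : take i.+1 (w ++ E :: t) = rcons (take i w) (nth N w i).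
  by rewrite takel_cat // -take_nth.
have adm := extendable_admissible (extendable_take i.+1 compl).
rewrite take_i in adm *; rewrite /yend (take_nth N lt_i_w) elig_rcons //.
have x_le : (endpt (w ++ E :: t)).1 <= l%:Z by case/andP: compl => _ /eqP ->.
have := endpt_cat_x (rcons w E) t; rewrite cat_rcons endpt_rcons /=.
have := endpt_cat_x (take i.+1 w) (drop i.+1 w); rewrite cat_take_drop -take_nth //.
lia.
Qed.

Lemma take_after_lastE w n j : (j <= n)%N ->
  take ((size w).+1 + j) (w ++ E :: nseq n N) = rcons w E ++ nseq j N.
Proof.
move=> le_jn; rewrite take_cat ifN; last by rewrite -leqNgt; lia.
by rewrite (_ : ((size w).+1 + j - size w)%N = j.+1) /= ?take_nseq ?cat_rcons //; lia.
Qed.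

Lemma elig_after_lastE l k w n j : complete l k (w ++ E :: nseq n N) ->
  (j < n)%N -> elig l k (take ((size w).+1 + j) (w ++ E :: nseq n N)) = 1%N.
Proof.
move=> compl lt_jn; rewrite take_after_lastE 1?ltnW //; apply: elig_last_column.
- move: (compl) => /andP[_ /eqP].
  by rewrite /endpt -cat_rcons !foldl_cat !foldl_move_nseqN => -[].
- have := extendable_take ((size w).+1 + j.+1) compl.
  by rewrite take_after_lastE // -addn1 nseqD catA /= cats1.
Qed.

Theorem lemma2p1 (l k : nat) (w0 w : seq step) (n : nat) :
  (1 <= l)%N -> (1 <= k)%N -> complete l k w0 ->
  w0 = w ++ E :: nseq n N ->
  (prob l k w0)^-1 =
    (2 * 3 ^ hcount k w * 2 ^ hccount k w * 2 ^ vcount k w * 1 ^ vccount k w)%N%:R.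
Proof.
move=> l_ge1 k_ge1 compl w0E.
have size_w0 : size w0 = ((size w).+1 + n)%N.
  by rewrite w0E size_cat /= size_nseq addSn addnS.
rewrite /prob prodfV invrK -natr_prod; congr (_%:R).
rewrite size_w0 big_split_ord big_ord_recl /= take0 elig_nil // -!mulnA.
congr (_ * _)%N; rewrite !mulnA -prod_step_weight.
rewrite [X in (_ * X)%N]big1 ?muln1 => [|j _]; last first.
  by rewrite w0E elig_after_lastE // -w0E.
by apply: eq_bigr => i _; rewrite w0E elig_take_before_lastE // -w0E.
Qed.
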